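(* Let $(A,\diamond,\ast,\varepsilon)$ be a pre-$F$-manifold color algebra, and define for homogeneous $x,y\in A$ (extended bilinearly) $x\cdot y=x\diamond y+\varepsilon(x,y)\,y\diamond x$ and $[x,y]=x\ast y-\varepsilon(x,y)\,y\ast x$. Then: (1) $(A,\cdot,[\,,\,],\varepsilon)$ is an $F$-manifold color algebra; (2) $(A,L,\mathfrak L)$ is a representation of the $F$-manifold color algebra $(A,\cdot,[\,,\,],\varepsilon)$, where $L,\mathfrak L:A\to\mathfrak{gl}(A)$ are given by $L_x y=x\ast y$ and $\mathfrak L_x y=x\diamond y$.
   Context: $G$ is an abelian group and $\varepsilon:G\times G\to\mathbb K\setminus\{0\}$ a skew-symmetric bicharacter: $\varepsilon(a,b)\varepsilon(b,a)=1$, $\varepsilon(a,b+c)=\varepsilon(a,b)\varepsilon(a,c)$, $\varepsilon(a+b,c)=\varepsilon(a,c)\varepsilon(b,c)$; $\mathbb K$ algebraically closed of characteristic zero, spaces finite-dimensional. For homogeneous $x\in A_a,y\in A_b$, $\varepsilon(x,y)$ means $\varepsilon(a,b)$, $\varepsilon(x,y+z)$ means $\varepsilon(a,b+c)$, etc. A Zinbiel color algebra $(A,\diamond,\varepsilon)$: $G$-graded $A$ with bilinear $\diamond$, $A_a\diamond A_b\subseteq A_{a+b}$, $x\diamond(y\diamond z)=(x\diamond y)\diamond z+\varepsilon(x,y)(y\diamond x)\diamond z$. A pre-Lie color algebra $(A,\ast,\varepsilon)$: $G$-graded $A$ with bilinear $\ast$, $A_a\ast A_b\subseteq A_{a+b}$,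 $(x\ast y)\ast z-x\ast(y\ast z)=\varepsilon(x,y)((y\ast x)\ast z-y\ast(x\ast z))$. A pre-$F$-manifold color algebra $(A,\diamond,\ast,\varepsilon)$ is such that $(A,\diamond,\varepsilon)$ is a Zinbiel color algebra, $(A,\ast,\varepsilon)$ is a pre-Lie color algebra, and for all homogeneous $x,y,z,w$: $F_1(x\cdot y,z,w)=x\diamond F_1(y,z,w)+\varepsilon(x,y)y\diamond F_1(x,z,w)$ and $(F_1(x,y,z)+\varepsilon(y,z)F_1(x,z,y)+\varepsilon(x,y+z)F_2(y,z,x))\diamond w=\varepsilon(x,y+z)F_2(y,z,x\diamond w)-x\diamond F_2(y,z,w)$, where $F_1(x,y,z)=x\ast(y\diamond z)-\varepsilon(x,y)y\diamond(x\ast z)-[x,y]\diamond z$ and $F_2(x,y,z)=x\diamond(y\ast z)+\varepsilon(x,y)y\diamond(x\ast z)-(x\cdot y)\ast z$, with $\cdot$ and $[\,,\,]$ as in the claim. An $\varepsilon$-commutative associative algebra: $G$-graded associative $(A,\cdot)$ with $A_aA_b\subseteq A_{a+b}$ and $x\cdot y=\varepsilon(x,y)y\cdot x$. A Lie color algebra: $G$-graded with bilinear $[\,,\,]$, $[A_a,A_b]\subseteq A_{a+b}$, $[x,y]=-\varepsilon(x,y)[y,x]$, $\varepsilon(z,x)[x,[y,z]]+\varepsilon(y,z)[z,[x,y]]+\varepsilon(x,y)[y,[z,x]]=0$. An $F$-manifold color algebra is $(A,\cdot,[\,,\,],\varepsilon)$ with $(A,\cdot,\varepsilon)$ an $\varepsilon$-commutative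 associative algebra and $(A,[\,,\,],\varepsilon)$ a Lie color algebra such that $P_{x\cdot y}(z,w)=x\cdot P_y(z,w)+\varepsilon(x,y)y\cdot P_x(z,w)$, where $P_x(y,z)=[x,y\cdot z]-[x,y]\cdot z-\varepsilon(x,y)y\cdot[x,z]$. A representation of such an $A$ on a $G$-graded space $V$ is a triple $(V,\rho,\mu)$ where $\rho:A\to\mathfrak{gl}(V)$ satisfies $\rho(x)V_a\subseteq V_{a+b}$ for $x\in A_b$ and $\rho([x,y])=\rho(x)\rho(y)-\varepsilon(x,y)\rho(y)\rho(x)$, $\mu:A\to\mathfrak{gl}(V)$ satisfies the same degree condition and $\mu(x\cdot y)=\mu(x)\mu(y)$, and for all homogeneous $x_1,x_2,x_3$: $R(x_1\cdot x_2,x_3)=\mu(x_1)R(x_2,x_3)+\varepsilon(x_1,x_2)\mu(x_2)R(x_1,x_3)$ and $\mu(P_{x_1}(x_2,x_3))=\varepsilon(x_1,x_2+x_3)S(x_2,x_3)\mu(x_1)-\mu(x_1)S(x_2,x_3)$, where $R(x_1,x_2)=\rho(x_1)\mu(x_2)-\varepsilon(x_1,x_2)\mu(x_2)\rho(x_1)-\mu([x_1,x_2])$ and $S(x_1,x_2)=\mu(x_1)\rho(x_2)+\varepsilon(x_1,x_2)\mu(x_2)\rho(x_1)-\rho(x_1\cdot x_2)$. *)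

From HB Require Import structures.
From mathcomp Require Import all_boot all_order all_algebra.
Set Implicit Arguments. Unset Strict Implicit. Unset Printing Implicit Defensive.
Import GRing.Theory.
Local Open Scope ring_scope.

Section ColorDefs.
Variables (G : zmodType) (K : fieldType).

Definition skew_bichar (eps : G -> G -> K) :=
  [/\ forall a b, eps a b != 0,
      forall a b, eps a b * eps b a = 1,
      forall a b c, eps a (b + c) = eps a b * eps a c &
      forall a b c, eps (a + b) c = eps a c * eps b c].

(* A G-grading of a finite-dimensional K-space V: V = (+)_{a in G} V_a. *)
Definition grading (V : vectType K) (Vg : G -> {vspace V}) :=
  (forall v : V, exists s : seq G, uniq s /\
     exists f : G -> V, (forall a, f a \in Vg a) /\ v = \sum_(a <- s) f a) /\
  (forall (s : seq G) (f : G -> V), uniq s -> (forall a, f a \in Vg a) ->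
     \sum_(a <- s) f a = 0 -> forall a, a \in s -> f a = 0).

Variable (A : vectType K).

Definition bilinear_op (op : A -> A -> A) :=
  (forall k x y z, op (k *: x + y) z = k *: op x z + op y z) /\
  (forall k x y z, op x (k *: y + z) = k *: op x y + op x z).

Variables (Ag : G -> {vspace A}) (eps : G -> G -> K).

Definition graded_op (op : A -> A -> A) :=
  bilinear_op op /\
  (forall a b x y, x \in Ag a -> y \in Ag b -> op x y \in Ag (a + b)).

Definition zinbiel_color (diamond : A -> A -> A) :=
  graded_op diamond /\
  forall a b c x y z, x \in Ag a -> y \in Ag b -> z \in Ag c ->
    diamond x (diamond y z) =
    diamond (diamond x y) z + eps a b *: diamond (diamond y x) z.

Definition prelie_color (star : A -> A -> A) :=
  graded_op star /\
  forall a b c x y z, x \in Ag a -> y \in Ag b -> z \in Ag c ->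
    star (star x y) z - star x (star y z) =
    eps a b *: (star (star y x) z - star y (star x z)).

(* x . y and [x,y] for homogeneous x in A_a, y in A_b *)
Definition sym_prod (diamond : A -> A -> A) a b x y :=
  diamond x y + eps a b *: diamond y x.
Definition skew_prod (star : A -> A -> A) a b x y :=
  star x y - eps a b *: star y x.

Definition F1 (diamond star : A -> A -> A) a b x y z :=
  star x (diamond y z) - eps a b *: diamond y (star x z)
  - diamond (skew_prod star a b x y) z.
Definition F2 (diamond star : A -> A -> A) a b x y z :=
  diamond x (star y z) + eps a b *: diamond y (star x z)
  - star (sym_prod diamond a b x y) z.

Definition preF_color (diamond star : A -> A -> A) :=
  [/\ zinbiel_color diamond, prelie_color star,
  (forall a b c d x y z w,
     x \in Ag a -> y \in Ag b -> z \in Ag c -> w \in Ag d ->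
     F1 diamond star (a + b) c (sym_prod diamond a b x y) z w =
     diamond x (F1 diamond star b c y z w)
     + eps a b *: diamond y (F1 diamond star a c x z w)) &
  (forall a b c d x y z w,
     x \in Ag a -> y \in Ag b -> z \in Ag c -> w \in Ag d ->
     diamond (F1 diamond star a b x y z + eps b c *: F1 diamond star a c x z y
              + eps a (b + c) *: F2 diamond star b c y z x) w =
     eps a (b + c) *: F2 diamond star b c y z (diamond x w)
     - diamond x (F2 diamond star b c y z w))].

Definition eps_comm_assoc (dot : A -> A -> A) :=
  [/\ graded_op dot,
      (forall x y z, dot (dot x y) z = dot x (dot y z)) &
      (forall a b x y, x \in Ag a -> y \in Ag b -> dot x y = eps a b *: dot y x)].

Definition lie_color (br : A -> A -> A) :=
  [/\ graded_op br,
      (forall a b x y, x \in Ag a -> y \in Ag b -> br x y = - (eps a b *: br y x)) &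
      (forall a b c x y z, x \in Ag a -> y \in Ag b -> z \in Ag c ->
         eps c a *: br x (br y z) + eps b c *: br z (br x y)
         + eps a b *: br y (br z x) = 0)].

Definition Pop (dot br : A -> A -> A) a b x y z :=
  br x (dot y z) - dot (br x y) z - eps a b *: dot y (br x z).

Definition F_manifold_color (dot br : A -> A -> A) :=
  [/\ eps_comm_assoc dot, lie_color br &
      forall a b c d x y z w,
        x \in Ag a -> y \in Ag b -> z \in Ag c -> w \in Ag d ->
        Pop dot br (a + b) c (dot x y) z w =
        dot x (Pop dot br b c y z w) + eps a b *: dot y (Pop dot br a c x z w)].

Variables (V : vectType K) (Vg : G -> {vspace V}).

Definition rep_map (f : A -> V -> V) :=
  [/\ (forall x k u v, f x (k *: u + v) = k *: f x u + f x v),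
      (forall k x y v, f (k *: x + y) v = k *: f x v + f y v) &
      (forall a b x v, x \in Ag b -> v \in Vg a -> f x v \in Vg (a + b))].

Definition Rop (br : A -> A -> A) (rho mu : A -> V -> V) a1 a2 x1 x2 v :=
  rho x1 (mu x2 v) - eps a1 a2 *: mu x2 (rho x1 v) - mu (br x1 x2) v.
Definition Sop (dot : A -> A -> A) (rho mu : A -> V -> V) a1 a2 x1 x2 v :=
  mu x1 (rho x2 v) + eps a1 a2 *: mu x2 (rho x1 v) - rho (dot x1 x2) v.

Definition FM_rep (dot br : A -> A -> A) (rho mu : A -> V -> V) :=
  grading Vg /\ rep_map rho /\ rep_map mu /\
  [/\ (forall a b x y v, x \in Ag a -> y \in Ag b ->
         rho (br x y) v = rho x (rho y v) - eps a b *: rho y (rho x v)),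
      (forall x y v, mu (dot x y) v = mu x (mu y v)),
      (forall a1 a2 a3 x1 x2 x3 v,
         x1 \in Ag a1 -> x2 \in Ag a2 -> x3 \in Ag a3 ->
         Rop br rho mu (a1 + a2) a3 (dot x1 x2) x3 v =
         mu x1 (Rop br rho mu a2 a3 x2 x3 v)
         + eps a1 a2 *: mu x2 (Rop br rho mu a1 a3 x1 x3 v)) &
      (forall a1 a2 a3 x1 x2 x3 v,
         x1 \in Ag a1 -> x2 \in Ag a2 -> x3 \in Ag a3 ->
         mu (Pop dot br a1 a2 x1 x2 x3) v =
         eps a1 (a2 + a3) *: Sop dot rho mu a2 a3 x2 x3 (mu x1 v)
         - mu x1 (Sop dot rho mu a2 a3 x2 x3 v))].

End ColorDefs.

(* On homogeneous elements every axiom to be checked is a linear identity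
   between iterated products; it extends to all of A because both sides are
   additive in each argument and A is the sum of its homogeneous components.
   The Zinbiel identity says (x . y) <> z = x <> (y <> z), which together with
   the left eps-commutativity x <> (y <> z) = eps(x,y) y <> (x <> z) gives the
   associativity of x . y; the pre-Lie identity says L_[x,y] = [L_x, L_y],
   which gives the Jacobi identity.  Finally
     P_x(y,z) = F1(x,y,z) + eps(y,z) F1(x,z,y) + eps(x,y+z) F2(y,z,x),
   and the maps R and S of (A, L, <>) are F1 and F2, so the two compatibility
   axioms of the pre-F-manifold color algebra are exactly the two
   representation axioms, and together they give the compatibility of P with
   the product. *)

From HB Require Import structures.
From mathcomp Require Import all_boot all_order all_algebra.
From mathcomp Require Import ring.
Set Implicit Arguments. Unset Strict Implicit. Unset Printing Implicit Defensive.
Import GRing.Theory.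
Local Open Scope ring_scope.

Inductive lexpr (R : Type) : Type :=
  | LAtom of nat
  | LAdd of lexpr R & lexpr R
  | LOpp of lexpr R
  | LScale of R & lexpr R
  | LZero.

Section LinearExpressions.
Variables (R : pzRingType) (V : lmodType R).

Fixpoint leval (env : seq V) (e : lexpr R) : V :=
  match e with
  | LAtom i => env`_i
  | LAdd e1 e2 => leval env e1 + leval env e2
  | LOpp e => - leval env e
  | LScale k e => k *: leval env e
  | LZero => 0
  end.

Fixpoint lcoef (e : lexpr R) (i : nat) : R :=
  match e with
  | LAtom j => if i == j then 1 else 0
  | LAdd e1 e2 => lcoef e1 i + lcoef e2 i
  | LOpp e => - lcoef e i
  | LScale k e => k * lcoef e i
  | LZero => 0
  end.

Lemma leval_coef env e :
  leval env e = \sum_(i < size env) lcoef e i *: env`_i.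
Proof.
elim: e => [j|e1 IH1 e2 IH2|e IH|k e IH|] /=.
- have [lt_j|le_j] := ltnP j (size env).
    rewrite (bigD1 (Ordinal lt_j)) //= eqxx scale1r big1 ?addr0 // => i ne_ij.
    by rewrite ifN ?scale0r.
  rewrite nth_default // big1 // => i _.
  by rewrite ltn_eqF ?scale0r // (leq_trans (ltn_ord i) le_j).
- by rewrite IH1 IH2 -big_split; apply: eq_bigr => i _; rewrite scalerDl.
- by rewrite IH -sumrN; apply: eq_bigr => i _; rewrite scaleNr.
- by rewrite IH scaler_sumr; apply: eq_bigr => i _; rewrite scalerA.
- by rewrite big1 // => i _; rewrite scale0r.
Qed.

(* Unlike [forall i, i < n -> P i], this unfolds under [simpl] to one
   conjunct per atom, which [ring]/[field] then close one by one. *)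
Fixpoint forall_lt (n : nat) (P : nat -> Prop) : Prop :=
  if n is n'.+1 then P n' /\ forall_lt n' P else True.

Lemma forall_ltP n P : forall_lt n P -> forall i, (i < n)%N -> P i.
Proof.
elim: n => // n IH /= [Pn Plt] i; rewrite ltnS leq_eqVlt => /orP[/eqP-> //|].
exact: IH.
Qed.

Lemma leval_eq env e1 e2 :
  forall_lt (size env) (fun i => lcoef e1 i = lcoef e2 i) ->
  leval env e1 = leval env e2.
Proof.
move=> eq_coef; rewrite !leval_coef; apply: eq_bigr => i _.
by rewrite (forall_ltP eq_coef (ltn_ord i)).
Qed.

End LinearExpressions.

Ltac add_atom e l :=
  lazymatch l with
  | nil => constr:(e :: l)
  | e :: _ => l
  | ?h :: ?t => let t' := add_atom e t in constr:(h :: t')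
  end.

Ltac atom_index e l :=
  lazymatch l with
  | e :: _ => constr:(0%N)
  | _ :: ?t => let n := atom_index e t in constr:(S n)
  end.

Ltac collect_atoms e l :=
  lazymatch e with
  | ?a + ?b => let l1 := collect_atoms a l in collect_atoms b l1
  | - ?a => collect_atoms a l
  | _ *: ?a => collect_atoms a l
  | 0 => l
  | _ => add_atom e l
  end.

Ltac reify_lexpr R e l :=
  lazymatch e with
  | ?a + ?b =>
      let ra := reify_lexpr R a l in let rb := reify_lexpr R b l in
      constr:(@LAdd R ra rb)
  | - ?a => let ra := reify_lexpr R a l in constr:(@LOpp R ra)
  | ?k *: ?a => let ra := reify_lexpr R a l in constr:(@LScale R k ra)
  | 0 => constr:(@LZero R)
  | _ => let n := atom_index e l in constr:(@LAtom R n)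
  end.

(* Reduces an equation between linear combinations of syntactic atoms to
   the equality of the coefficients of each atom. *)
Ltac lreify R :=
  lazymatch goal with |- ?lhs = ?rhs =>
    let T := type of lhs in
    let atoms := collect_atoms lhs (@nil T) in
    let atoms := collect_atoms rhs atoms in
    let el := reify_lexpr R lhs atoms in
    let er := reify_lexpr R rhs atoms in
    apply: (@leval_eq R _ atoms el er); simpl
  end.

Section Bilinear.
Variables (K : fieldType) (A : vectType K) (op : A -> A -> A).
Hypothesis op_bil : bilinear_op op.

Lemma bilinDl x y z : op (x + y) z = op x z + op y z.
Proof. by have := op_bil.1 1 x y z; rewrite !scale1r. Qed.
Lemma bilinDr x y z : op x (y + z) = op x y + op x z.
Proof. by have := op_bil.2 1 x y z; rewrite !scale1r. Qed.
Lemma bilin0l z : op 0 z = 0.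
Proof. by apply: (addrI (op 0 z)); rewrite addr0 -bilinDl addr0. Qed.
Lemma bilin0r z : op z 0 = 0.
Proof. by apply: (addrI (op z 0)); rewrite addr0 -bilinDr addr0. Qed.
Lemma bilinZl k x z : op (k *: x) z = k *: op x z.
Proof. by have := op_bil.1 k x 0 z; rewrite !addr0 bilin0l addr0. Qed.
Lemma bilinZr k x z : op z (k *: x) = k *: op z x.
Proof. by have := op_bil.2 k z x 0; rewrite !addr0 bilin0r addr0. Qed.
Lemma bilinNl x z : op (- x) z = - op x z.
Proof. by rewrite -scaleN1r bilinZl scaleN1r. Qed.
Lemma bilinNr x z : op z (- x) = - op z x.
Proof. by rewrite -scaleN1r bilinZr scaleN1r. Qed.

End Bilinear.

Ltac bilin_expand :=
  repeat match goal with
  | op_bil : bilinear_op ?op |- _ =>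
      first [ rewrite (bilinDl op_bil) | rewrite (bilinDr op_bil)
            | rewrite (bilinNl op_bil) | rewrite (bilinNr op_bil)
            | rewrite (bilinZl op_bil) | rewrite (bilinZr op_bil)
            | rewrite (bilin0l op_bil) | rewrite (bilin0r op_bil) ]
  end.

Section ColorAlgebras.
Variables (G : zmodType) (K : fieldType) (A : vectType K).
Variables (Ag : G -> {vspace A}) (eps : G -> G -> K).
Hypotheses (eps_bichar : skew_bichar eps) (Ag_grading : grading Ag).

Lemma eps_neq0 a b : eps a b != 0. Proof. by case: eps_bichar. Qed.
Lemma eps_skew a b : eps a b * eps b a = 1. Proof. by case: eps_bichar. Qed.
Lemma epsDr a b c : eps a (b + c) = eps a b * eps a c.
Proof. by case: eps_bichar. Qed.
Lemma epsDl a b c : eps (a + b) c = eps a c * eps b c.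
Proof. by case: eps_bichar. Qed.
Lemma epsV a b : eps b a = (eps a b)^-1.
Proof. by apply: (mulfI (eps_neq0 a b)); rewrite mulfV ?eps_neq0 // eps_skew. Qed.

Lemma homog_ind (P : A -> Prop) :
  P 0 -> (forall u v, P u -> P v -> P (u + v)) ->
  (forall a u, u \in Ag a -> P u) -> forall u, P u.
Proof.
move=> P0 PD Phomog u; have [s [_ [f [f_homog ->]]]] := Ag_grading.1 u.
elim: s => [|a s IH]; first by rewrite big_nil.
by rewrite big_cons; apply: PD => //; apply: (Phomog a).
Qed.

Lemma graded_op_rep_map op : graded_op Ag op -> rep_map Ag Ag op.
Proof.
case=> op_bil op_mem; split=> [x k u v|k x y v|a b x v hx hv].
- exact: op_bil.2.
- exact: op_bil.1.
- by rewrite addrC; apply: op_mem.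
Qed.

Ltac lincomb :=
  bilin_expand; rewrite ?epsDl ?epsDr; lreify K; repeat split;
  first [ring | field; by rewrite ?eps_neq0].

Tactic Notation "homog_elim" ident(x) "as" ident(a) ident(hx) :=
  elim/homog_ind: x;
    [ lincomb
    | let IHu := fresh "IHu" in let IHv := fresh "IHv" in
      intros ? ? IHu IHv; bilin_expand; rewrite IHu IHv; lincomb
    | intros a x hx ].

Variables (diamond dot : A -> A -> A).
Hypotheses (zinbiel : zinbiel_color Ag eps diamond) (dot_bil : bilinear_op dot).
Hypothesis dotE : forall a b x y, x \in Ag a -> y \in Ag b ->
  dot x y = diamond x y + eps a b *: diamond y x.

Let diamond_bil : bilinear_op diamond := zinbiel.1.1.
Let diamond_mem := zinbiel.1.2.
Let zinbielE := zinbiel.2.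

Lemma zinbiel_left_comm a b c x y z :
  x \in Ag a -> y \in Ag b -> z \in Ag c ->
  diamond x (diamond y z) = eps a b *: diamond y (diamond x z).
Proof.
by move=> hx hy hz; rewrite (zinbielE hx hy hz) (zinbielE hy hx hz) (epsV a b); lincomb.
Qed.

Lemma dot_mem a b x y : x \in Ag a -> y \in Ag b -> dot x y \in Ag (a + b).
Proof.
move=> hx hy; rewrite (dotE hx hy) memvD ?memvZ ?(diamond_mem hx hy) //.
by rewrite addrC (diamond_mem hy hx).
Qed.

Lemma dot_comm a b x y : x \in Ag a -> y \in Ag b -> dot x y = eps a b *: dot y x.
Proof. by move=> hx hy; rewrite (dotE hx hy) (dotE hy hx) (epsV a b); lincomb. Qed.

Lemma diamond_dotl x y z : diamond (dot x y) z = diamond x (diamond y z).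
Proof.
homog_elim x as a hx; homog_elim y as b hy; homog_elim z as c hz.
by rewrite (dotE hx hy) (zinbielE hx hy hz); lincomb.
Qed.

Lemma dot_assoc x y z : dot (dot x y) z = dot x (dot y z).
Proof.
homog_elim x as a hx; homog_elim y as b hy; homog_elim z as c hz.
rewrite (dotE (dot_mem hx hy) hz) (dotE hx (dot_mem hy hz)).
rewrite !diamond_dotl (dotE hx hy) (dotE hy hz); bilin_expand.
rewrite (zinbiel_left_comm hz hx hy) (zinbiel_left_comm hz hy hx).
by rewrite (epsV a c) (epsV b c); lincomb.
Qed.

Lemma zinbiel_eps_comm_assoc : eps_comm_assoc Ag eps dot.
Proof.
split; [split=> // a b x y; exact: dot_mem | exact: dot_assoc |].
by move=> a b x y; apply: dot_comm.
Qed.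

Variables (star br : A -> A -> A).
Hypotheses (prelie : prelie_color Ag eps star) (br_bil : bilinear_op br).
Hypothesis brE : forall a b x y, x \in Ag a -> y \in Ag b ->
  br x y = star x y - eps a b *: star y x.

Let star_bil : bilinear_op star := prelie.1.1.
Let star_mem := prelie.1.2.
Let prelieE := prelie.2.

Lemma star_starl a b c x y z :
  x \in Ag a -> y \in Ag b -> z \in Ag c ->
  star (star x y) z =
  star x (star y z) + eps a b *: (star (star y x) z - star y (star x z)).
Proof. by move=> hx hy hz; rewrite -(prelieE hx hy hz) addrC subrK. Qed.

Lemma br_mem a b x y : x \in Ag a -> y \in Ag b -> br x y \in Ag (a + b).
Proof.
move=> hx hy; rewrite (brE hx hy) memvB ?memvZ ?(star_mem hx hy) //.
by rewrite addrC (star_mem hy hx).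
Qed.

Lemma br_skew a b x y : x \in Ag a -> y \in Ag b -> br x y = - (eps a b *: br y x).
Proof. by move=> hx hy; rewrite (brE hx hy) (brE hy hx) (epsV a b); lincomb. Qed.

Lemma br_jacobi a b c x y z : x \in Ag a -> y \in Ag b -> z \in Ag c ->
  eps c a *: br x (br y z) + eps b c *: br z (br x y)
  + eps a b *: br y (br z x) = 0.
Proof.
move=> hx hy hz.
rewrite (brE hx (br_mem hy hz)) (brE hz (br_mem hx hy)) (brE hy (br_mem hz hx)).
rewrite (brE hy hz) (brE hx hy) (brE hz hx); bilin_expand.
rewrite (star_starl hx hy hz) (star_starl hy hz hx) (star_starl hz hx hy).
by rewrite ?epsDl ?epsDr (epsV c a) (epsV b c) (epsV a b); lincomb.
Qed.

Lemma prelie_lie_color : lie_color Ag eps br.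
Proof.
split; [split=> // a b x y; exact: br_mem | |].
- by move=> a b x y; apply: br_skew.
- by move=> a b c x y z; apply: br_jacobi.
Qed.

Lemma star_br a b x y v : x \in Ag a -> y \in Ag b ->
  star (br x y) v = star x (star y v) - eps a b *: star y (star x v).
Proof.
move=> hx hy; homog_elim v as c hv.
by rewrite (brE hx hy); bilin_expand; rewrite (star_starl hx hy hv); lincomb.
Qed.

Hypothesis F1_compat : forall a b c d x y z w,
  x \in Ag a -> y \in Ag b -> z \in Ag c -> w \in Ag d ->
  F1 eps diamond star (a + b) c (sym_prod eps diamond a b x y) z w =
  diamond x (F1 eps diamond star b c y z w)
  + eps a b *: diamond y (F1 eps diamond star a c x z w).
Hypothesis F2_compat : forall a b c d x y z w,
  x \in Ag a -> y \in Ag b -> z \in Ag c -> w \in Ag d ->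
  diamond (F1 eps diamond star a b x y z + eps b c *: F1 eps diamond star a c x z y
           + eps a (b + c) *: F2 eps diamond star b c y z x) w =
  eps a (b + c) *: F2 eps diamond star b c y z (diamond x w)
  - diamond x (F2 eps diamond star b c y z w).

Lemma F1D a b x y u v :
  F1 eps diamond star a b x y (u + v) =
  F1 eps diamond star a b x y u + F1 eps diamond star a b x y v.
Proof. by rewrite /F1; lincomb. Qed.

Lemma F2D a b x y u v :
  F2 eps diamond star a b x y (u + v) =
  F2 eps diamond star a b x y u + F2 eps diamond star a b x y v.
Proof. by rewrite /F2; lincomb. Qed.

Lemma Pop_F1_F2 a b c x y z : x \in Ag a -> y \in Ag b -> z \in Ag c ->
  Pop eps dot br a b x y z =
  F1 eps diamond star a b x y z + eps b c *: F1 eps diamond star a c x z y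
  + eps a (b + c) *: F2 eps diamond star b c y z x.
Proof.
move=> hx hy hz.
rewrite /Pop (brE hx (dot_mem hy hz)) (dotE (br_mem hx hy) hz).
rewrite (dotE hy (br_mem hx hz)) (dotE hy hz) (brE hx hy) (brE hx hz).
by rewrite /F1 /F2 /sym_prod /skew_prod !epsDr (epsV a b); lincomb.
Qed.

Lemma Pop_mem a b c x y z : x \in Ag a -> y \in Ag b -> z \in Ag c ->
  Pop eps dot br a b x y z \in Ag (a + (b + c)).
Proof.
move=> hx hy hz; rewrite /Pop; apply: memvB; [apply: memvB | apply: memvZ].
- exact: br_mem hx (dot_mem hy hz).
- by rewrite addrA; apply: dot_mem (br_mem hx hy) hz.
- by rewrite addrCA; apply: dot_mem hy (br_mem hx hz).
Qed.

Lemma F1_dotl a b c x y z w : x \in Ag a -> y \in Ag b -> z \in Ag c ->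
  F1 eps diamond star (a + b) c (dot x y) z w =
  diamond x (F1 eps diamond star b c y z w)
  + eps a b *: diamond y (F1 eps diamond star a c x z w).
Proof.
move=> hx hy hz; elim/homog_ind: w => [|u v IHu IHv|d w hw].
- by rewrite /F1; lincomb.
- by rewrite !F1D IHu IHv; lincomb.
- by rewrite (dotE hx hy); apply: F1_compat hw.
Qed.

Lemma diamond_Pop a b c x y z w : x \in Ag a -> y \in Ag b -> z \in Ag c ->
  diamond (Pop eps dot br a b x y z) w =
  eps a (b + c) *: F2 eps diamond star b c y z (diamond x w)
  - diamond x (F2 eps diamond star b c y z w).
Proof.
move=> hx hy hz; elim/homog_ind: w => [|u v IHu IHv|d w hw].
- by rewrite /F2; lincomb.
- (* [bilin_expand] would unfold [Pop], so distribute over [u + v] by hand. *)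
  by rewrite (bilinDr diamond_bil) IHu IHv (bilinDr diamond_bil) !F2D; lincomb.
- by rewrite (Pop_F1_F2 hx hy hz); apply: F2_compat hw.
Qed.

Lemma Pop_dotl a b c d x y z w :
  x \in Ag a -> y \in Ag b -> z \in Ag c -> w \in Ag d ->
  Pop eps dot br (a + b) c (dot x y) z w =
  dot x (Pop eps dot br b c y z w) + eps a b *: dot y (Pop eps dot br a c x z w).
Proof.
move=> hx hy hz hw.
rewrite (Pop_F1_F2 (dot_mem hx hy) hz hw) (F1_dotl _ hx hy hz) (F1_dotl _ hx hy hw).
rewrite (dotE hx (Pop_mem hy hz hw)) (dotE hy (Pop_mem hx hz hw)).
rewrite (diamond_Pop _ hy hz hw) (diamond_Pop _ hx hz hw).
rewrite (Pop_F1_F2 hy hz hw) (Pop_F1_F2 hx hz hw) (dotE hx hy).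
by rewrite /F1 /F2 /sym_prod /skew_prod !epsDr !epsDl (epsV a b); lincomb.
Qed.

Lemma Rop_F1 a b x y v : x \in Ag a -> y \in Ag b ->
  Rop eps br star diamond a b x y v = F1 eps diamond star a b x y v.
Proof. by move=> hx hy; rewrite /Rop (brE hx hy). Qed.

Lemma Sop_F2 a b x y v : x \in Ag a -> y \in Ag b ->
  Sop eps dot star diamond a b x y v = F2 eps diamond star a b x y v.
Proof. by move=> hx hy; rewrite /Sop (dotE hx hy). Qed.

Lemma preF_F_manifold_color : F_manifold_color Ag eps dot br.
Proof.
split; [exact: zinbiel_eps_comm_assoc | exact: prelie_lie_color |].
move=> a b c d x y z w hx hy hz hw; exact: Pop_dotl hx hy hz hw.
Qed.

Lemma preF_FM_rep : FM_rep Ag eps Ag dot br star diamond.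
Proof.
split=> //; split; first exact: graded_op_rep_map prelie.1.
split; first exact: graded_op_rep_map zinbiel.1.
split.
- by move=> a b x y v; apply: star_br.
- exact: diamond_dotl.
- move=> a1 a2 a3 x1 x2 x3 v h1 h2 h3.
  rewrite (Rop_F1 _ (dot_mem h1 h2) h3) (Rop_F1 _ h2 h3) (Rop_F1 _ h1 h3).
  exact: F1_dotl h1 h2 h3.
- move=> a1 a2 a3 x1 x2 x3 v h1 h2 h3.
  by rewrite !(Sop_F2 _ h2 h3); apply: diamond_Pop.
Qed.

End ColorAlgebras.

Theorem theorem4p4 (G : zmodType) (K : closedFieldType) (A : vectType K)
    (Ag : G -> {vspace A}) (eps : G -> G -> K)
    (diamond star dot br : A -> A -> A) :
  [pchar K] =i pred0 ->
  skew_bichar eps ->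
  grading Ag ->
  preF_color Ag eps diamond star ->
  bilinear_op dot -> bilinear_op br ->
  (forall a b x y, x \in Ag a -> y \in Ag b ->
     dot x y = sym_prod eps diamond a b x y) ->
  (forall a b x y, x \in Ag a -> y \in Ag b ->
     br x y = skew_prod eps star a b x y) ->
  F_manifold_color Ag eps dot br /\
  FM_rep Ag eps Ag dot br (fun x y => star x y) (fun x y => diamond x y).
Proof.
move=> _ eps_bichar Ag_grading [zinbiel prelie F1_compat F2_compat].
move=> dot_bil br_bil dotE brE.
split.
- exact (preF_F_manifold_color eps_bichar Ag_grading zinbiel dot_bil dotE
    prelie br_bil brE F1_compat F2_compat).
- exact (preF_FM_rep eps_bichar Ag_grading zinbiel dot_bil dotE
    prelie brE F1_compat F2_compat).
Qed.
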